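(* For each $n\ge1$, the map $\eta\circ\iota$ is a bijection between $\mathcal{T}_n$ (the set of triangles, up to similarity, having exact pedal period $n$) and $\mathcal{W}_n$ (the set of primitive two-dimensional words of dimension $2\times n$ over $\{0,1\}$).
   Context: Let $\Sigma=\{0,1\}$, $\Gamma=\{0,1,2,3\}$. A two-dimensional word of dimension $m\times n$ over $\Sigma$ is a map $\{0,\dots,m-1\}\times\{0,\dots,n-1\}\to\Sigma$; $W^{p\times q}$ is the $pm\times qn$ word with $W^{p\times q}[i,j]=W[i\bmod m,j\bmod n]$; $W$ is periodic if $W=V^{p\times q}$ for nonempty $V$ with $p\ge2$ or $q\ge2$, primitive otherwise. $\mathcal{W}_n$ is the set of primitive $2\times n$ words over $\Sigma$. $\eta$ sends $0\mapsto\begin{bmatrix}0\\1\end{bmatrix}$, $1\mapsto\begin{bmatrix}0\\0\end{bmatrix}$, $2\mapsto\begin{bmatrix}1\\1\end{bmatrix}$, $3\mapsto\begin{bmatrix}1\\0\end{bmatrix}$, extended to $w=w_0\cdots w_{n-1}\in\Gamma^n$ by letting the $j$th column of $\eta(w)$ be $\eta(w_j)$. Triangles up to similarity are sorted normalized angle triples in $C=\{(a,b,c)\in\mathbb{R}^3: a\ge b\ge c>0,\ a+b+c=1\}$ (angles $a\pi,b\pi,c\pi$); $C^*=\{(a,b,c)\in C: a\ne1/2\}$. Regions of $C^*$: $R_0=\{a<1/2\}$, $R_1=\{2a-1\ge2b,\ a>1/2\}$, $R_2=\{2b>2a-1\ge2c,\ a>1/2\}$, $R_3=\{2c>2a-1,\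 a>1/2\}$. Sorted pedal map $P:C^*\to C$: $P(a,b,c)=(1-2c,1-2b,1-2a)$ on $R_0$, $(2a-1,2b,2c)$ on $R_1$, $(2b,2a-1,2c)$ on $R_2$, $(2b,2c,2a-1)$ on $R_3$. $\mathcal{T}_n=\{p\in C: P^j(p)\text{ defined for }0\le j<n,\ P^n(p)=p,\ P^d(p)\ne p\text{ for }1\le d<n\}$. The itinerary $\iota(p)=w_0\cdots w_{n-1}\in\Gamma^n$ of $p\in\mathcal{T}_n$ is defined by $P^j(p)\in R_{w_j}$ for $0\le j<n$. *)

From mathcomp Require Import all_boot all_order all_algebra.
From mathcomp Require Import reals.
Set Implicit Arguments. Unset Strict Implicit. Unset Printing Implicit Defensive.
Import Order.TTheory GRing.Theory Num.Theory.
Local Open Scope ring_scope.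

Section Pedal.
Variable R : realType.

(* A (normalized) angle triple (a,b,c). *)
Definition triple := (R * R * R)%type.

Definition ta (x : triple) : R := x.1.1.
Definition tb (x : triple) : R := x.1.2.
Definition tc (x : triple) : R := x.2.

Definition inC (x : triple) : bool :=
  [&& tb x <= ta x, tc x <= tb x, 0 < tc x & ta x + tb x + tc x == 1].

Definition inCstar (x : triple) : bool := inC x && (ta x != 2^-1).

Definition inR0 (x : triple) : bool := inCstar x && (ta x < 2^-1).
Definition inR1 (x : triple) : bool :=
  [&& inCstar x, 2 * ta x - 1 >= 2 * tb x & ta x > 2^-1].
Definition inR2 (x : triple) : bool :=
  [&& inCstar x, 2 * tb x > 2 * ta x - 1, 2 * ta x - 1 >= 2 * tc x & ta x > 2^-1].
Definition inR3 (x : triple) : bool :=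
  [&& inCstar x, 2 * tc x > 2 * ta x - 1 & ta x > 2^-1].

Definition inRegion (k : nat) (x : triple) : bool :=
  match k with
  | 0 => inR0 x | 1 => inR1 x | 2 => inR2 x | 3 => inR3 x | _ => false
  end.

(* Sorted pedal map P : Cstar -> C, extended arbitrarily (identity) outside Cstar. *)
Definition pedal (x : triple) : triple :=
  let a := ta x in let b := tb x in let c := tc x in
  if inR0 x then (1 - 2 * c, 1 - 2 * b, 1 - 2 * a)
  else if inR1 x then (2 * a - 1, 2 * b, 2 * c)
  else if inR2 x then (2 * b, 2 * a - 1, 2 * c)
  else if inR3 x then (2 * b, 2 * c, 2 * a - 1)
  else x.

Definition inT (n : nat) (p : triple) : Prop :=
  [/\ inC p,
      (forall j, (j < n)%N -> inCstar (iter j pedal p)),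
      iter n pedal p = p
    & (forall d, (1 <= d)%N -> (d < n)%N -> iter d pedal p <> p)].

Definition regionOf (x : triple) : nat :=
  if inR0 x then 0 else if inR1 x then 1 else if inR2 x then 2 else 3.

Definition itinerary (n : nat) (p : triple) : 'I_n -> nat :=
  fun j => regionOf (iter j pedal p).

End Pedal.

(* eta : Gamma -> columns; Sigma = {0,1} encoded by bool (false = 0, true = 1).
   row 0 = top entry, row 1 = bottom entry. *)
Definition eta_col (g : nat) (i : 'I_2) : bool :=
  match g, nat_of_ord i with
  | 0, 0 => false | 0, _ => true
  | 1, 0 => false | 1, _ => false
  | 2, 0 => true  | 2, _ => true
  | _, 0 => true  | _, _ => false
  end.

Definition eta (n : nat) (w : 'I_n -> nat) : 'M[bool]_(2, n) :=
  \matrix_(i < 2, j < n) eta_col (w j) i.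

Definition periodic (m n : nat) (W : 'M[bool]_(m, n)) : Prop :=
  exists (m' n' p q : nat) (V : 'M[bool]_(m'.+1, n'.+1)),
    [/\ (p * m'.+1 = m)%N, (q * n'.+1 = n)%N, (2 <= p)%N || (2 <= q)%N
      & forall (i : 'I_m) (j : 'I_n),
          W i j = V (inord (i %% m'.+1)) (inord (j %% n'.+1))].

Definition primitive (m n : nat) (W : 'M[bool]_(m, n)) : Prop := ~ periodic W.

Arguments itinerary {R} n p _.

(* On each region [R_k] the sorted pedal map is affine, with linear part [+-2] times a
   permutation of the coordinates.  Two periodic points with the same itinerary are therefore
   both fixed by one affine map expanding by [2 ^ n], so they coincide.  Conversely the inverse
   branches along a periodic itinerary compose to a contraction of the closed triangle; since
   every permutation of three letters has order dividing 6, its fixed point is obtained by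
   linear algebra.  This fixed point starts an orbit with the prescribed itinerary as soon as it
   avoids the boundaries between regions, which holds when the word visits [R_0] or [R_3],
   i.e. when its two rows differ.  Primitivity rules out exactly the two remaining cases: equal
   rows (an orbit in [R_1] and [R_2], where the smallest angle doubles at each step, cannot be
   periodic) and a proper column period (which would give a shorter period). *)

From mathcomp Require Import all_boot all_order all_algebra all_fingroup cyclic.
From mathcomp Require Import reals lra zify ring.
Set Implicit Arguments. Unset Strict Implicit. Unset Printing Implicit Defensive.
Import Order.TTheory GRing.Theory Num.Theory.

Lemma iter_mod (T : Type) (f : T -> T) x n m :
  iter n f x = x -> iter m f x = iter (m %% n) f x.
Proof.
move=> fx; rewrite {1}(divn_eq m n) addnC iterD; congr (iter _ _ _).
by elim: (m %/ n) => [|k IH]; rewrite ?mul0n // mulSn iterD IH fx.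
Qed.

Lemma exists_min_period (T : eqType) (f : T -> T) x n d : 0 < d ->
  iter n f x = x -> iter d f x = x ->
  exists d0, [/\ 0 < d0, d0 <= d, d0 %| n & forall j, iter j f x = iter (j %% d0) f x].
Proof.
move=> d_gt0 fn fd.
have ex_period : exists m, (0 < m) && (iter m f x == x) by exists d; rewrite d_gt0 fd eqxx.
case: (ex_minnP ex_period) => d0 /andP[d0_gt0 /eqP fd0] d0_min.
have f_mod j := iter_mod j fd0.
exists d0; split=> //; first by apply: d0_min; rewrite d_gt0 fd eqxx.
apply/eqP; case: (posnP (n %% d0)) => // n_mod_gt0.
have := d0_min (n %% d0); rewrite n_mod_gt0 -f_mod fn eqxx => /(_ isT).
by rewrite leqNgt ltn_pmod.
Qed.

Definition decode (top bot : bool) : nat :=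
  match top, bot with
  | false, true => 0 | false, false => 1 | true, true => 2 | true, false => 3
  end.

Lemma ord2P (i : 'I_2) : i = ord0 \/ i = ord_max.
Proof. by case: i => -[|[|//]] hi; [left | right]; apply: val_inj. Qed.

Lemma eta_col_decode n (W : 'M[bool]_(2, n)) i j :
  eta_col (decode (W ord0 j) (W ord_max j)) i = W i j.
Proof.
by case: (ord2P i) => ->; case: (W ord0 j); case: (W ord_max j).
Qed.

Lemma eta_col_inj k l : k <= 3 -> l <= 3 -> eta_col k =1 eta_col l -> k = l.
Proof.
move=> hk hl e; move: (e ord0) (e ord_max); clear e.
by case: k l hk hl => [|[|[|[|//]]]] [|[|[|[|//]]]].
Qed.

Lemma eta_col_rows_eq k : k <= 3 -> eta_col k ord0 = eta_col k ord_max -> (k == 1) || (k == 2).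
Proof. by case: k => [|[|[|[|//]]]]. Qed.

Lemma periodic2P n (W : 'M[bool]_(2, n)) : 0 < n ->
  periodic W <-> (forall j, W ord0 j = W ord_max j) \/
    exists d, [/\ 0 < d, d < n, d %| n &
      forall i (j j' : 'I_n), j %% d = j' %% d -> W i j = W i j'].
Proof.
move=> n_gt0; split.
  case=> m' [n' [p [q [V [hp hq pq hW]]]]]; case/orP: pq => [p_ge2 | q_ge2].
    have rows : 0 %% m'.+1 = 1 %% m'.+1 by have -> : m' = 0 by nia.
    by left => j; rewrite !hW rows.
  right; exists n'.+1; split=> //; first by nia.
    by rewrite -hq dvdn_mull.
  by move=> i j j' e; rewrite !hW e.
case=> [rows | [d [d_gt0 d_lt dn cols]]].
  exists 0, n.-1, 2, 1, (\matrix_(i < 1, j < n.-1.+1) W ord0 (cast_ord (prednK n_gt0) j))%R.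
  split=> //; first by rewrite mul1n prednK.
  move=> i j; rewrite mxE.
  have -> : cast_ord (prednK n_gt0) (inord (j %% n.-1.+1)) = j.
    by apply: val_inj; rewrite /= inordK prednK // ?modn_small // ltn_pmod.
  by case: (ord2P i) => ->; rewrite ?rows.
have d_le : d.-1.+1 <= n by rewrite prednK // ltnW.
exists 1, d.-1, 1, (n %/ d), (\matrix_(i < 2, j < d.-1.+1) W i (widen_ord d_le j))%R.
have [k nk] := dvdnP dn.
split=> //; first by rewrite prednK // nk mulnK.
  by rewrite nk mulnK //; apply/orP; right; nia.
move=> i j; rewrite mxE (_ : inord (i %% 2) = i); last first.
  by apply: val_inj; rewrite /= modn_small // inordK.
by apply: cols; rewrite /= inordK prednK // ?modn_mod // ltn_pmod.
Qed.

Lemma primitive_rows_differ n (W : 'M[bool]_(2, n)) : 0 < n -> primitive W ->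
  exists j, W ord0 j != W ord_max j.
Proof.
move=> n_gt0 hW; case: (boolP [exists j, W ord0 j != W ord_max j]) => [/existsP // | rows].
case: hW; apply/(periodic2P _ n_gt0); left => j.
by apply/eqP; move/existsPn/(_ j): rows; rewrite negbK.
Qed.

Lemma periodic_propagate (T : Type) (f : nat -> T) (n m : nat) (Q : T -> Prop) :
  0 < n -> (forall j, f (j + n) = f j) -> Q (f m) ->
  (forall j, Q (f j) -> Q (f j.+1)) -> forall j, Q (f j).
Proof.
move=> n_gt0 fn Qm hQ j.
have f_shift k i : f (i + k * n) = f i.
  by elim: k => [|k IH]; rewrite ?addn0 // mulSn addnCA addnC fn.
have Q_after d : Q (f (m + d)) by elim: d => [|d IH]; rewrite ?addn0 // addnS; apply: hQ.
rewrite -(f_shift m j) -(subnKC (_ : m <= j + m * n)) //.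
by rewrite (leq_trans _ (leq_addl _ _)) // leq_pmulr.
Qed.

Local Open Scope ring_scope.

Section Pedal.

Variable R : realType.
Implicit Types (p q x y z v : triple R) (t : R).
Local Notation P := (@pedal R).

Ltac split_andb := repeat match goal with H : is_true (_ && _) |- _ => case/andP: H => ? ? end.

Ltac solve_andb := repeat (apply/andP; split); lazymatch goal with
  | |- is_true (~~ (_ == _)) => apply/eqP => ?; lra
  | |- is_true (_ == _) => apply/eqP; lra
  | _ => lra end.

Definition tscale t v : triple R := (t * ta v, t * tb v, t * tc v).
Definition tsub x y : triple R := (ta x - ta y, tb x - tb y, tc x - tc y).

Definition coord x (i : 'I_3) : R :=
  match val i with 0 => ta x | 1 => tb x | _ => tc x end.

Let i0 : 'I_3 := @Ordinal 3 0 isT.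
Let i1 : 'I_3 := @Ordinal 3 1 isT.
Let i2 : 'I_3 := @Ordinal 3 2 isT.

Definition permute (s : 'S_3) v : triple R :=
  (coord v (s i0), coord v (s i1), coord v (s i2)).

Lemma triple_coordP x y : (forall i, coord x i = coord y i) -> x = y.
Proof.
case: x => [[a b] c]; case: y => [[a' b'] c'] h.
by move: (h i0) (h i1) (h i2); rewrite /coord /ta /tb /tc /= => -> -> ->.
Qed.

Lemma coord_permute s v i : coord (permute s v) i = coord v (s i).
Proof.
by case: i => [[|[|[|//]]] hi]; rewrite /coord /=;
  congr (coord v (s _)); apply: val_inj.
Qed.

Lemma permuteM s s' v : permute s (permute s' v) = permute (s * s')%g v.
Proof. by apply: triple_coordP => i; rewrite !coord_permute permM. Qed.

Lemma permute1 v : permute 1%g v = v.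
Proof. by apply: triple_coordP => i; rewrite coord_permute perm1. Qed.

Lemma coord_tscale t v i : coord (tscale t v) i = t * coord v i.
Proof. by rewrite /coord; case: (val i) => [|[|]]. Qed.

Lemma permute_scale s t v : permute s (tscale t v) = tscale t (permute s v).
Proof.
by apply: triple_coordP => i; rewrite coord_tscale !coord_permute coord_tscale.
Qed.

Lemma tscaleA t t' v : tscale t (tscale t' v) = tscale (t * t') v.
Proof. by rewrite /tscale /= !mulrA. Qed.

Lemma tscale1 v : tscale 1 v = v.
Proof. by case: v => [[a b] c]; rewrite /tscale /= !mul1r. Qed.

Lemma tsub_eq0 x y : tsub x y = (0, 0, 0) -> x = y.
Proof.
case: x => [[a b] c]; case: y => [[a' b'] c']; rewrite /tsub /ta /tb /tc /=.
by case=> /eqP + /eqP + /eqP; rewrite !subr_eq0 => /eqP-> /eqP-> /eqP->.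
Qed.

Lemma perm3_expg6 (s : 'S_3) : (s ^+ 6 = 1)%g.
Proof.
apply/eqP; rewrite -order_dvdn.
by have := order_dvdG (in_setT s); rewrite cardsT card_Sn.
Qed.

Lemma tscale_fixed_eq0 t v : t != 1 -> v = tscale t v -> v = (0, 0, 0).
Proof.
move=> ht; have key (u : R) : u = t * u -> u = 0.
  move/eqP; rewrite -subr_eq0 -{1}(mul1r u) -mulrBl mulf_eq0 subr_eq0 eq_sym.
  by rewrite (negbTE ht) => /eqP.
by case: v => [[a b] c] [/key -> /key -> /key ->].
Qed.

Definition monomial_map (F : triple R -> triple R) t (s : 'S_3) :=
  forall x y, tsub (F x) (F y) = tscale t (permute s (tsub x y)).

Lemma monomial_comp F G t t' s s' : monomial_map F t s -> monomial_map G t' s' ->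
  monomial_map (F \o G) (t * t') (s * s')%g.
Proof.
by move=> hF hG x y; rewrite /= hF hG permute_scale permuteM tscaleA.
Qed.

Lemma monomial_iter F t s m : monomial_map F t s ->
  monomial_map (iter m F) (t ^+ m) (s ^+ m)%g.
Proof.
move=> hF; elim: m => [|m IH] x y; first by rewrite expr0 expg0 permute1 tscale1.
by rewrite exprS expgS; exact: (monomial_comp hF IH).
Qed.

Lemma normr_ne1_expr6 t : `|t| != 1 -> t ^+ 6 != 1.
Proof. by apply: contra => /eqP h6; rewrite -(pexpr_eq1 (n := 6)) // -normrX h6 normr1. Qed.

Lemma monomial_fixed_eq F t s x y : monomial_map F t s -> `|t| != 1 ->
  F x = x -> F y = y -> x = y.
Proof.
move=> hF ht hx hy; apply/tsub_eq0/(tscale_fixed_eq0 (normr_ne1_expr6 ht)).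
rewrite -{1}(iter_fix 6 hx) -{1}(iter_fix 6 hy) (monomial_iter 6 hF).
by rewrite perm3_expg6 permute1.
Qed.

(* As [s ^+ 6 = 1], [iter 6 F] is the homothety of ratio [t ^+ 6] about any fixed point of [F];
   solving for its centre gives the fixed point. *)
Definition fixpoint (F : triple R -> triple R) (rho : R) : triple R :=
  tscale ((1 - rho ^+ 6)^-1) (iter 6 F (0, 0, 0)).

Lemma monomial_iter6 F t s : monomial_map F t s ->
  monomial_map (iter 6 F) (`|t| ^+ 6) 1%g.
Proof.
move=> hF x y; rewrite (monomial_iter 6 hF) perm3_expg6.
by rewrite -normrX ger0_norm // (exprM t 3 2) sqr_ge0.
Qed.

Lemma fixpointE F t s : monomial_map F t s -> `|t| < 1 ->
  F (fixpoint F `|t|) = fixpoint F `|t|.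
Proof.
move=> hF ht; set z := fixpoint F _.
have hF6 := monomial_iter6 hF.
have r_lt1 : `|t| ^+ 6 < 1 by rewrite expr_lt1.
have z_fixed : iter 6 F z = z.
  have := hF6 z (0, 0, 0); rewrite permute1 /z /fixpoint.
  case: (iter 6 F (tscale _ _)) => [[A B] C]; case: (iter 6 F (0, 0, 0)) => [[a b] c].
  rewrite /tsub /tscale /ta /tb /tc /= => -[eA eB eC].
  have r1 : 1 - `|t| ^+ 6 != 0 by rewrite subr_eq0 eq_sym lt_eqF.
  by congr (_, _, _); [move/eqP: eA | move/eqP: eB | move/eqP: eC];
    rewrite subr_eq => /eqP ->; field.
apply: (monomial_fixed_eq hF6 _ _ z_fixed).
- by rewrite normrX normr_id lt_eqF.
- by rewrite -iterSr iterS z_fixed.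
Qed.

Definition inCbar x : bool :=
  [&& tb x <= ta x, tc x <= tb x, 0 <= tc x & ta x + tb x + tc x == 1].

(* Test the four constraints of the closed triangle at vertices where they vanish. *)
Lemma inCbar_homothety_centre z r : 0 <= r < 1 ->
  (forall y, inCbar y -> exists2 y', inCbar y' & tsub y' z = tscale r (tsub y z)) ->
  inCbar z.
Proof.
case/andP=> r_ge0 r_lt1 hz.
have [y1 + e1] : exists2 y', inCbar y' & tsub y' z = tscale r (tsub (2^-1, 2^-1, 0) z).
  by apply: hz; rewrite /inCbar /ta /tb /tc /=; solve_andb.
have [y2 + e2] : exists2 y', inCbar y' & tsub y' z = tscale r (tsub (1, 0, 0) z).
  by apply: hz; rewrite /inCbar /ta /tb /tc /=; solve_andb.
move: e1 e2; clear hz; case: z y1 y2 => [[a b] c] [[a1 b1] c1] [[a2 b2] c2].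
rewrite /inCbar /tsub /tscale /ta /tb /tc /= => -[e1 f1 _] [e2 f2 g2].
case/and4P=> _ h2 h3 /eqP h4 /and4P[h1 _ _ _].
apply/and4P; split; [nra | nra | nra | apply/eqP; nra].
Qed.

Lemma fixpoint_inCbar F t s : monomial_map F t s -> `|t| < 1 ->
  (forall y, inCbar y -> inCbar (F y)) -> inCbar (fixpoint F `|t|).
Proof.
move=> hF ht hC; apply: (inCbar_homothety_centre (r := `|t| ^+ 6)).
  by rewrite exprn_ge0 ?expr_lt1.
move=> y hy; exists (iter 6 F y); first by elim: 6%N => //= m IH; apply: hC.
by rewrite -{1}(iter_fix 6 (fixpointE hF ht)) (monomial_iter6 hF) permute1.
Qed.

Definition branch (k : nat) x : triple R :=
  let a := ta x in let b := tb x in let c := tc x in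
  match k with
  | 0 => (1 - 2 * c, 1 - 2 * b, 1 - 2 * a)
  | 1 => (2 * a - 1, 2 * b, 2 * c)
  | 2 => (2 * b, 2 * a - 1, 2 * c)
  | _ => (2 * b, 2 * c, 2 * a - 1)
  end.

Definition unbranch (k : nat) y : triple R :=
  let a := ta y in let b := tb y in let c := tc y in
  match k with
  | 0 => ((1 - c) / 2, (1 - b) / 2, (1 - a) / 2)
  | 1 => ((a + 1) / 2, b / 2, c / 2)
  | 2 => ((b + 1) / 2, a / 2, c / 2)
  | _ => ((c + 1) / 2, a / 2, b / 2)
  end.

Definition branch_ratio (k : nat) : R := if k is 0 then -2 else 2.

Definition branch_perm (k : nat) : 'S_3 :=
  match k with
  | 0 => tperm i0 i2
  | 1 => 1
  | 2 => tperm i0 i1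
  | _ => tperm i1 i2 * tperm i0 i1
  end.

Lemma branchK k : cancel (unbranch k) (branch k).
Proof.
by case=> [[a b] c]; case: k => [|[|[|k]]]; rewrite /branch /unbranch /ta /tb /tc /=;
  congr (_, _, _); field.
Qed.

Lemma normr_branch_ratio k : `|branch_ratio k| = 2.
Proof. by case: k => [|k]; rewrite /= ?normrN ger0_norm. Qed.

Lemma branch_monomial k : monomial_map (branch k) (branch_ratio k) (branch_perm k).
Proof.
case=> [[a b] c] [[a' b'] c']; rewrite /branch /permute /tsub /tscale /=.
by case: k => [|[|[|k]]];
  rewrite /= ?perm1 ?permM ?permE /coord /ta /tb /tc /=; congr (_, _, _); ring.
Qed.

Lemma monomial_inv F G t s : t != 0 -> cancel G F -> monomial_map F t s ->
  monomial_map G t^-1 (s^-1)%g.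
Proof.
move=> t0 GK hF x y; rewrite -{2}(GK x) -{2}(GK y) hF.
by rewrite permute_scale permuteM mulVg permute1 tscaleA mulVf // tscale1.
Qed.

Lemma unbranch_monomial k :
  monomial_map (unbranch k) (branch_ratio k)^-1 ((branch_perm k)^-1)%g.
Proof.
apply: (monomial_inv _ (branchK k) (branch_monomial k)).
by rewrite -normr_gt0 normr_branch_ratio.
Qed.

Lemma regionOf_le3 x : (regionOf x <= 3)%N.
Proof. by rewrite /regionOf; do 3?case: ifP. Qed.

Lemma inRegion_inCstar k x : inRegion k x -> inCstar x.
Proof. by case: k => [|[|[|[|k]]]] //= /andP[]. Qed.

Lemma inRegion_regionOf x : inCstar x -> inRegion (regionOf x) x.
Proof.
move=> hx; have a_ne : ta x != 2^-1 by case/andP: hx.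
rewrite /regionOf; case: ifP => // /negbT; rewrite /inR0 hx -leNgt => a_ge.
have a_gt : 2^-1 < ta x by rewrite lt_def a_ne a_ge.
case: ifP => // /negbT; rewrite /inR1 hx a_gt andbT -ltNge => hb.
case: ifP => // /negbT; rewrite /inR2 hx hb a_gt andbT -ltNge => hc.
by rewrite /= /inR3 hx hc a_gt.
Qed.

Lemma inRegion_uniq k l x : inRegion k x -> inRegion l x -> k = l.
Proof.
case: k => [|[|[|[|//]]]]; case: l => [|[|[|[|//]]]] //= h1 h2 //;
  move: h1 h2; rewrite /inR0 /inR1 /inR2 /inR3 /inCstar /inC => h1 h2;
  split_andb; exfalso; lra.
Qed.

Lemma regionOf_inRegion k x : inRegion k x -> regionOf x = k.
Proof.
by move=> h; apply: (inRegion_uniq (inRegion_regionOf (inRegion_inCstar h))).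
Qed.

Lemma pedal_branch x : inCstar x -> pedal x = branch (regionOf x) x.
Proof.
move=> hx; have := inRegion_regionOf hx; rewrite /pedal /regionOf.
by case: (inR0 x) => //=; case: (inR1 x) => //=; case: (inR2 x) => //= ->.
Qed.

Fixpoint branches (w : nat -> nat) (m : nat) x : triple R :=
  if m is m'.+1 then branch (w m') (branches w m' x) else x.

Lemma branches_monomial w m :
  exists t s, monomial_map (branches w m) t s /\ `|t| = 2 ^+ m.
Proof.
elim: m => [|m [t [s [hF ht]]]].
  by exists 1, 1%g; split => [x y|]; rewrite ?normr1 ?permute1 ?tscale1.
exists (branch_ratio (w m) * t), (branch_perm (w m) * s)%g; split.
  exact: monomial_comp (branch_monomial _) hF.
by rewrite normrM normr_branch_ratio ht exprS.
Qed.

Lemma iter_pedal_branches w m x :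
  (forall j, (j < m)%N -> inRegion (w j) (iter j P x)) -> iter m P x = branches w m x.
Proof.
elim: m => [//|m IH] hw /=.
rewrite -IH => [|j hj]; last exact/hw/ltnW.
have hm := hw m (ltnSn m).
by rewrite pedal_branch ?(inRegion_inCstar hm) // (regionOf_inRegion hm).
Qed.

(* Both points are fixed by the composite of the branches along [w], which expands by [2 ^ n]. *)
Lemma periodic_itinerary_uniq w n x y : (0 < n)%N ->
  (forall j, (j < n)%N -> inRegion (w j) (iter j P x)) ->
  (forall j, (j < n)%N -> inRegion (w j) (iter j P y)) ->
  iter n P x = x -> iter n P y = y -> x = y.
Proof.
move=> n_gt0 hx hy px py; have [t [s [hF ht]]] := branches_monomial w n.
apply: (monomial_fixed_eq hF); rewrite -?iter_pedal_branches //.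
by rewrite ht gt_eqF // exprn_egt1 ?ltr1n // -lt0n.
Qed.

Lemma R12_no_periodic_orbit w n x : (0 < n)%N -> inC x -> iter n P x = x ->
  (forall j, (j < n)%N -> inRegion (w j) (iter j P x)) ->
  (forall j, (j < n)%N -> (w j == 1)%N || (w j == 2)%N) -> False.
Proof.
move=> n_gt0 hx px hw h12.
have tc_branches m : (m <= n)%N -> tc (branches w m x) = 2 ^+ m * tc x.
  elim: m => [|m IH] hm; first by rewrite mul1r.
  rewrite exprS -mulrA -IH ?(ltnW hm) //=.
  by case/orP: (h12 m hm) => /eqP ->.
have := tc_branches n (leqnn n); rewrite -iter_pedal_branches // px.
have /and4P[_ _ c_gt0 _] := hx.
have : 1 < 2 ^+ n :> R by rewrite exprn_egt1 ?ltr1n // -lt0n.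
move: (2 ^+ n : R) => e; nra.
Qed.

Definition flat : triple R := (1, 0, 0).
Definition equilateral : triple R := (3^-1, 3^-1, 3^-1).
Definition isosceles x : Prop := ta x = tb x \/ tb x = tc x.

Ltac case_inCbar y :=
  case: y => [[a b] c]; rewrite /inCbar /unbranch /ta /tb /tc /= => /and4P[? ? ? /eqP ?].

Lemma unbranch_inCbar k y : inCbar y -> inCbar (unbranch k y).
Proof.
by case_inCbar y; case: k => [|[|[|k]]] /=; solve_andb.
Qed.

Lemma unbranch_inRegion k y : (k <= 3)%N -> inCbar y -> 0 < tc y ->
  (k = 2%N -> tb y < ta y) -> (k = 3%N -> tc y < tb y) -> inRegion k (unbranch k y).
Proof.
move=> hk; case_inCbar y => c_gt0 h2 h3.
case: k hk h2 h3 => [|[|[|[|//]]]] _ h2 h3;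
  rewrite /= /inR0 /inR1 /inR2 /inR3 /inCstar /inC /ta /tb /tc /=;
  [ | | have := h2 erefl | have := h3 erefl]; move=> *; solve_andb.
Qed.

Lemma tc_unbranch_eq0 k y : inCbar y -> tc (unbranch k y) = 0 -> tc y = 0.
Proof. by case_inCbar y; case: k => [|[|[|k]]] /=; lra. Qed.

Lemma unbranch03_tc_eq0 k y : inCbar y -> (k = 0 \/ k = 3)%N ->
  tc (unbranch k y) = 0 -> y = flat.
Proof. by case_inCbar y => -[]-> /= ?; rewrite /flat; congr (_, _, _); lra. Qed.

Lemma unbranch_eq_flat k y : inCbar y -> (k <= 3)%N -> unbranch k y = flat ->
  k = 1%N /\ y = flat.
Proof.
case_inCbar y; case: k => [|[|[|[|//]]]] _ [] *; rewrite /flat;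
  [exfalso; lra | split=> //; congr (_, _, _); lra | exfalso; lra | exfalso; lra].
Qed.

Lemma unbranch_isosceles k y : inCbar y -> 0 < tc y ->
  isosceles (unbranch k y) -> isosceles y.
Proof.
rewrite /isosceles; case_inCbar y => c_gt0.
by case: k => [|[|[|k]]] /= [] ?;
  [right | left | exfalso | right | exfalso | left | exfalso | left]; lra.
Qed.

Lemma unbranch2_isosceles y : inCbar y -> 0 < tc y -> ta y = tb y ->
  isosceles (unbranch 2 y) -> y = equilateral.
Proof.
rewrite /isosceles /equilateral; case_inCbar y => c_gt0 ab [] ?; [exfalso | congr (_, _, _)]; lra.
Qed.

Lemma unbranch3_isosceles y : inCbar y -> 0 < tc y -> tb y = tc y ->
  isosceles (unbranch 3 y) -> y = equilateral.
Proof.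
rewrite /isosceles /equilateral; case_inCbar y => c_gt0 bc [] ?; [exfalso | congr (_, _, _)]; lra.
Qed.

Lemma unbranch_eq_equilateral k y : inCbar y -> (k <= 3)%N ->
  unbranch k y = equilateral -> k = 0%N /\ y = equilateral.
Proof.
case_inCbar y; case: k => [|[|[|[|//]]]] _ []; rewrite /equilateral => *;
  [split=> //; congr (_, _, _) | exfalso | exfalso | exfalso]; lra.
Qed.

Fixpoint unbranches (w : nat -> nat) (m : nat) y : triple R :=
  if m is m'.+1 then unbranch (w 0%N) (unbranches (w \o succn) m' y) else y.

Lemma unbranches_monomial w m :
  exists t s, monomial_map (unbranches w m) t s /\ `|t| = 2^-1 ^+ m.
Proof.
elim: m w => [|m IH] w.
  by exists 1, 1%g; split => [x y|]; rewrite ?normr1 ?permute1 ?tscale1.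
have [t [s [hF ht]]] := IH (w \o succn).
exists ((branch_ratio (w 0%N))^-1 * t), (((branch_perm (w 0%N))^-1)%g * s)%g; split.
  exact: monomial_comp (unbranch_monomial _) hF.
by rewrite normrM normfV normr_branch_ratio ht exprS.
Qed.

Lemma unbranches_inCbar w m y : inCbar y -> inCbar (unbranches w m y).
Proof. by elim: m w => [|m IH] w //= hy; apply/unbranch_inCbar/IH. Qed.

Lemma unbranchesSr w m y : unbranches w m.+1 y = unbranches w m (unbranch (w m) y).
Proof. by elim: m w => [|m IH] w //=; rewrite -IH. Qed.

Lemma eq_unbranches w w' m : w =1 w' -> unbranches w m =1 unbranches w' m.
Proof.
elim: m w w' => [|m IH] w w' ew y //=.
by rewrite ew (IH _ (w' \o succn)) // => i /=; rewrite ew.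
Qed.

(* The point at time [j] of the periodic orbit with itinerary [w]. *)
Definition cycle_point (w : nat -> nat) (n j : nat) : triple R :=
  fixpoint (unbranches (fun i => w (j + i)%N) n) (2^-1 ^+ n).

Lemma expr_half_lt1 m : (0 < m)%N -> (2^-1 : R) ^+ m < 1.
Proof. by move=> m_gt0; rewrite exprn_ilt1 -?lt0n //; lra. Qed.

Section CyclePoint.
Variables (w : nat -> nat) (n : nat).
Hypotheses (n_gt0 : (0 < n)%N) (w_periodic : forall j, w (j + n)%N = w j).

Lemma cycle_pointE j :
  unbranches (fun i => w (j + i)%N) n (cycle_point w n j) = cycle_point w n j
  /\ inCbar (cycle_point w n j).
Proof.
have [t [s [hF ht]]] := unbranches_monomial (fun i => w (j + i)%N) n.
have t_lt1 : `|t| < 1 by rewrite ht expr_half_lt1.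
rewrite /cycle_point -ht; split; first exact: fixpointE hF t_lt1.
by apply: fixpoint_inCbar hF t_lt1 _ => y; apply: unbranches_inCbar.
Qed.

Lemma cycle_point_uniq j y :
  unbranches (fun i => w (j + i)%N) n y = y -> y = cycle_point w n j.
Proof.
have [t [s [hF ht]]] := unbranches_monomial (fun i => w (j + i)%N) n.
move=> hy; apply: (monomial_fixed_eq hF _ hy (cycle_pointE j).1).
by rewrite ht lt_eqF ?expr_half_lt1.
Qed.

Lemma cycle_point_periodic j : cycle_point w n (j + n) = cycle_point w n j.
Proof.
rewrite /cycle_point /fixpoint (eq_iter (eq_unbranches n (w' := fun i => w (j + i)%N) _)) //.
by move=> i; rewrite addnAC w_periodic.
Qed.

Lemma cycle_point_unbranch j :
  cycle_point w n j = unbranch (w j) (cycle_point w n j.+1).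
Proof.
apply/esym/cycle_point_uniq; have [+ _] := cycle_pointE j.+1.
move: (cycle_point w n j.+1) => z z_fixed.
rewrite -(prednK n_gt0) unbranchesSr /= addSnnS (prednK n_gt0) w_periodic in z_fixed.
rewrite -(prednK n_gt0) /= addn0 -{2}z_fixed; congr unbranch.
by apply: eq_unbranches => i /=; rewrite addnS.
Qed.

End CyclePoint.

Section UnbranchOrbit.
Variables (w : nat -> nat) (X : nat -> triple R) (n : nat).
Hypotheses (n_gt0 : (0 < n)%N) (w_le3 : forall j, (w j <= 3)%N)
  (X_inCbar : forall j, inCbar (X j))
  (X_unbranch : forall j, X j = unbranch (w j) (X j.+1))
  (X_periodic : forall j, X (j + n)%N = X j)
  (w_turns : exists j, w j = 0%N \/ w j = 3%N).

(* A degenerate point would make the whole orbit [flat], a point fixed only by branch 1. *)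
Lemma orbit_tc_gt0 j : 0 < tc (X j).
Proof.
have /and4P[_ _ c_ge0 _] := X_inCbar j.
rewrite lt_def c_ge0 andbT; apply/eqP => c_eq0.
have c0 i : tc (X i) = 0.
  apply: (periodic_propagate (Q := fun x => tc x = 0) n_gt0 X_periodic c_eq0) => k.
  by rewrite X_unbranch; apply: tc_unbranch_eq0.
have [j0 hj0] := w_turns.
have flat_j0 : X j0.+1 = flat.
  by apply: (unbranch03_tc_eq0 (X_inCbar _) hj0); rewrite -X_unbranch; apply: c0.
have flat_step k : X k = flat -> w k = 1%N /\ X k.+1 = flat.
  by rewrite X_unbranch; apply: unbranch_eq_flat (X_inCbar _) (w_le3 _).
have flat_all i : X i = flat.
  by apply: (periodic_propagate (Q := eq^~ flat) n_gt0 X_periodic flat_j0) => k /flat_step[].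
have [w1 _] := flat_step j0 (flat_all j0).
by case: hj0; rewrite w1.
Qed.

Lemma orbit_isosceles m : isosceles (X m) -> forall j, isosceles (X j).
Proof.
move=> hm; apply: (periodic_propagate n_gt0 X_periodic hm) => k.
by rewrite X_unbranch; apply: unbranch_isosceles (X_inCbar _) (orbit_tc_gt0 _).
Qed.

Lemma orbit_equilateral m : X m = equilateral -> forall j, w j = 0%N.
Proof.
have unbranch_eq k : X k = equilateral -> w k = 0%N /\ X k.+1 = equilateral.
  by rewrite X_unbranch; apply: unbranch_eq_equilateral (X_inCbar _) (w_le3 _).
move=> hm j; apply: (unbranch_eq _ _).1.
by apply: (periodic_propagate (Q := eq^~ equilateral) n_gt0 X_periodic hm) => k /unbranch_eq[].
Qed.

(* An equality would make the orbit isosceles, hence equilateral, which only branch 0 allows. *)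
Lemma orbit_strict2 j : w j = 2%N -> tb (X j.+1) < ta (X j.+1).
Proof.
move=> wj; have /and4P[b_le_a _ _ _] := X_inCbar j.+1.
rewrite lt_def b_le_a andbT; apply/eqP => ab.
have iso_j : isosceles (unbranch 2 (X j.+1)).
  by rewrite -wj -X_unbranch; apply: (orbit_isosceles (m := j.+1)); left.
have := orbit_equilateral (unbranch2_isosceles (X_inCbar _) (orbit_tc_gt0 _) ab iso_j) j.
by rewrite wj.
Qed.

Lemma orbit_strict3 j : w j = 3%N -> tc (X j.+1) < tb (X j.+1).
Proof.
move=> wj; have /and4P[_ c_le_b _ _] := X_inCbar j.+1.
rewrite lt_def c_le_b andbT; apply/eqP => bc.
have iso_j : isosceles (unbranch 3 (X j.+1)).
  by rewrite -wj -X_unbranch; apply: (orbit_isosceles (m := j.+1)); right.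
have := orbit_equilateral (unbranch3_isosceles (X_inCbar _) (orbit_tc_gt0 _) bc iso_j) j.
by rewrite wj.
Qed.

Lemma orbit_inRegion j : inRegion (w j) (X j).
Proof.
rewrite X_unbranch; apply: unbranch_inRegion => //; first exact: orbit_tc_gt0.
- exact: orbit_strict2.
- exact: orbit_strict3.
Qed.

Lemma iter_pedal_orbit j : iter j P (X 0%N) = X j.
Proof.
elim: j => [//|j IH]; rewrite iterS IH.
have hj := orbit_inRegion j.
by rewrite pedal_branch ?(inRegion_inCstar hj) // (regionOf_inRegion hj) X_unbranch branchK.
Qed.

End UnbranchOrbit.

Lemma inT_primitive n p : (0 < n)%N -> inT n p -> primitive (eta (itinerary n p)).
Proof.
move=> n_gt0 [pC pCs pn pexact].
pose w j := regionOf (iter j P p).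
have w_inRegion j : (j < n)%N -> inRegion (w j) (iter j P p).
  by move=> hj; apply/inRegion_regionOf/pCs.
case/(periodic2P _ n_gt0) => [rows | [d [d_gt0 d_lt dn cols]]].
  apply: (R12_no_periodic_orbit n_gt0 pC pn w_inRegion) => j hj.
  by apply: eta_col_rows_eq (regionOf_le3 _) _; have := rows (Ordinal hj); rewrite !mxE.
have w_shift j : (j < n)%N -> w ((j + d) %% n)%N = w j.
  move=> hj; have hjd : ((j + d) %% n < n)%N by rewrite ltn_pmod.
  apply: eta_col_inj (regionOf_le3 _) (regionOf_le3 _) _ => i.
  have := cols i (Ordinal hjd) (Ordinal hj); rewrite !mxE; apply.
  by rewrite /= modn_dvdm // modnDr.
apply: (pexact d d_gt0 d_lt).
apply: (periodic_itinerary_uniq n_gt0 _ w_inRegion); last exact: pn.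
- by move=> j hj; rewrite -iterD (iter_mod _ pn) -(w_shift j hj) w_inRegion ?ltn_pmod.
- by rewrite -iterD addnC iterD pn.
Qed.

Lemma inT_itinerary_inj n p q : (0 < n)%N -> inT n p -> inT n q ->
  eta (itinerary n p) = eta (itinerary n q) -> p = q.
Proof.
move=> n_gt0 [_ pCs pn _] [_ qCs qn _] e.
apply: (periodic_itinerary_uniq (w := fun j => regionOf (iter j P p)) n_gt0 _ _ pn qn).
  by move=> j hj; apply/inRegion_regionOf/pCs.
move=> j hj; suff -> : regionOf (iter j P p) = regionOf (iter j P q).
  exact/inRegion_regionOf/qCs.
apply: eta_col_inj (regionOf_le3 _) (regionOf_le3 _) _ => i.
by have := congr1 (fun M : 'M[bool]_(2, n) => M i (Ordinal hj)) e; rewrite !mxE.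
Qed.

Lemma primitive_itinerary_surj n (W : 'M[bool]_(2, n)) : (0 < n)%N -> primitive W ->
  exists p, inT n p /\ eta (itinerary n p) = W.
Proof.
move=> n_gt0 hW.
pose col j : 'I_n := Ordinal (ltn_pmod j n_gt0).
pose w j := decode (W ord0 (col j)) (W ord_max (col j)).
have colK (j : 'I_n) : col j = j by apply: val_inj; rewrite /= modn_small.
have w_periodic j : w (j + n)%N = w j.
  by rewrite /w (_ : col (j + n)%N = col j) //; apply: val_inj; rewrite /= modnDr.
have w_turns : exists j, w j = 0%N \/ w j = 3%N.
  have [j rows] := primitive_rows_differ n_gt0 hW; exists j; rewrite /w colK.
  by move: rows; case: (W ord0 j); case: (W ord_max j) => //; [right | left].
pose X := cycle_point w n.
have X_inCbar j : inCbar (X j) by case: (cycle_pointE w n_gt0 j).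
have w_le3 j : (w j <= 3)%N by rewrite /w; case: (W _ _); case: (W _ _).
have X_unbranch j : X j = unbranch (w j) (X j.+1) := cycle_point_unbranch n_gt0 w_periodic j.
have X_periodic j : X (j + n)%N = X j := cycle_point_periodic w_periodic j.
have X_region := orbit_inRegion n_gt0 w_le3 X_inCbar X_unbranch X_periodic w_turns.
have iter_X := iter_pedal_orbit n_gt0 w_le3 X_inCbar X_unbranch X_periodic w_turns.
have W_X i (j : 'I_n) : W i j = eta_col (regionOf (iter j P (X 0%N))) i.
  by rewrite iter_X (regionOf_inRegion (X_region j)) /w colK eta_col_decode.
have Xn : iter n P (X 0%N) = X 0%N by rewrite iter_X -{1}(add0n n) X_periodic.
exists (X 0%N); split; last by apply/matrixP => i j; rewrite mxE W_X.
split=> //.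
- by case/andP: (inRegion_inCstar (X_region 0%N)).
- by move=> j _; rewrite iter_X; apply: inRegion_inCstar (X_region j).
move=> d d_gt0 d_lt Xd.
have [d0 [d0_gt0 d0_le d0n hd0]] := exists_min_period d_gt0 Xn Xd.
apply: hW; apply/(periodic2P _ n_gt0); right; exists d0; split=> //.
  exact: leq_ltn_trans d0_le d_lt.
by move=> i j j' e; rewrite !W_X hd0 e -hd0.
Qed.

End Pedal.

Theorem mainTheorem9 (R : realType) (n : nat) (hn : (1 <= n)%N) :
  [/\ (forall p : triple R, inT n p -> primitive (eta (itinerary n p))),
      (forall p q : triple R, inT n p -> inT n q ->
          eta (itinerary n p) = eta (itinerary n q) -> p = q)
    & (forall W : 'M[bool]_(2, n), primitive W ->
          exists p : triple R, inT n p /\ eta (itinerary n p) = W)].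
Proof.
split.
- by move=> p; apply: inT_primitive.
- by move=> p q; apply: inT_itinerary_inj.
- by move=> W; apply: primitive_itinerary_surj.
Qed.
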